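(* Let $G$ and $H$ be symmetric convex $N$-player games. Then for every player $i\in A$, $$R_i(G+H)\ge R_i(G)+R_i(H).$$
   Context: Let $A=\{1,\dots,N\}$ be a finite set of players. A game is any function $G:2^A\to\mathbb{R}$; sums of games are taken pointwise. A game $G$ is symmetric convex if there is a function $g:\{0,1,\dots,N\}\to\mathbb{R}$ with $G(S)=g(|S|)$ for all $S\subseteq A$, such that the increments $g(k+1)-g(k)$ are nonnegative for all $0\le k<N$ and nondecreasing in $k$. For a player $i$ and a coalition $S\subseteq A\setminus\{i\}$, the marginal contribution is $d_iG(S)=G(S\cup\{i\})-G(S)$. Let $f_i$ be a random subset of $A\setminus\{i\}$ with distribution $\Pr\{f_i=S\}=\frac{|S|!\,(N-|S|-1)!}{N!}$ for each $S\subseteq A\setminus\{i\}$. The Shapley uncertainty of $G$ for player $i$ is $R_i(G)=\mathrm{Var}[d_iG(f_i)]$. *)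

From mathcomp Require Import all_boot all_order all_algebra.
Set Implicit Arguments. Unset Strict Implicit. Unset Printing Implicit Defensive.
Import Order.TTheory GRing.Theory Num.Theory.
Local Open Scope ring_scope.

(* Players are A = 'I_N (i.e. {0,...,N-1}, a relabelling of {1,...,N}).
   A game is a real-valued function on coalitions {set 'I_N}. *)
Definition game (R : realFieldType) (N : nat) := {set 'I_N} -> R.

Definition game_add (R : realFieldType) (N : nat) (G H : game R N) : game R N :=
  fun S => G S + H S.

Definition symmetric_convex (R : realFieldType) (N : nat) (G : game R N) : Prop :=
  exists g : nat -> R,
    (forall S : {set 'I_N}, G S = g #|S|) /\
    (forall k : nat, (k < N)%N -> 0 <= g k.+1 - g k) /\
    (forall k : nat, (k.+1 < N)%N -> g k.+1 - g k <= g k.+2 - g k.+1).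

Definition marginal (R : realFieldType) (N : nat) (G : game R N) (i : 'I_N)
  (S : {set 'I_N}) : R := G (i |: S) - G S.

Definition shapley_prob (R : realFieldType) (N : nat) (S : {set 'I_N}) : R :=
  ((#|S|)`! * (N - #|S| - 1)`!)%:R / (N`!)%:R.

Definition shapley_expect (R : realFieldType) (N : nat) (i : 'I_N)
  (X : {set 'I_N} -> R) : R :=
  \sum_(S : {set 'I_N} | i \notin S) @shapley_prob R N S * X S.

Definition shapley_uncertainty (R : realFieldType) (N : nat) (G : game R N)
  (i : 'I_N) : R :=
  let m := shapley_expect i (marginal G i) in
  shapley_expect i (fun S => (marginal G i S - m) ^+ 2).

From mathcomp Require Import all_boot all_order all_algebra.
Import Order.TTheory GRing.Theory Num.Theory.
From mathcomp Require Import ring lra.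
Set Implicit Arguments.
Unset Strict Implicit.
Unset Printing Implicit Defensive.

Local Open Scope ring_scope.

(* The Shapley weights form a probability distribution on the coalitions not
   containing i, and R_i(G) is the variance of d_i G under it; hence
   R_i(G + H) = R_i(G) + R_i(H) + 2 Cov(d_i G, d_i H).  For a symmetric convex
   game, d_i G(S) = g(|S| + 1) - g(|S|) is a nondecreasing function of |S|, so
   d_i G and d_i H are comonotone and Chebyshev's sum inequality makes their
   covariance nonnegative. *)

Section WeightedMoments.

Variables (R : realFieldType) (T : finType) (P : pred T) (p : T -> R).

Definition expect (X : T -> R) : R := \sum_(t | P t) p t * X t.

Definition cov (X Y : T -> R) : R :=
  expect (fun t => (X t - expect X) * (Y t - expect Y)).

Definition var (X : T -> R) : R := cov X X.

Definition comonotone (X Y : T -> R) : Prop :=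
  forall s t, P s -> P t -> 0 <= (X s - X t) * (Y s - Y t).

Lemma eq_expect (X Y : T -> R) : X =1 Y -> expect X = expect Y.
Proof. by move=> eXY; apply: eq_bigr => t _; rewrite eXY. Qed.

Lemma eq_var (X1 X2 : T -> R) : X1 =1 X2 -> var X1 = var X2.
Proof.
move=> eX; rewrite /var /cov (eq_expect eX).
by apply: eq_expect => t; rewrite eX.
Qed.

Lemma expectD (X Y : T -> R) : expect (X \+ Y) = expect X + expect Y.
Proof. by rewrite -big_split; apply: eq_bigr => t _; rewrite mulrDr. Qed.

Lemma varD (X Y : T -> R) : var (X \+ Y) = var X + var Y + 2 * cov X Y.
Proof.
rewrite /var /cov (expectD X Y); set a := expect X; set b := expect Y.
clearbody a b; rewrite mulr_sumr -!big_split.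
by apply: eq_bigr => t _ /=; ring.
Qed.

Hypothesis p_ge0 : forall t, P t -> 0 <= p t.
Hypothesis p_sum1 : \sum_(t | P t) p t = 1.

Lemma sub_expectE (X : T -> R) (s : T) :
  X s - expect X = \sum_(t | P t) p t * (X s - X t).
Proof.
under [RHS]eq_bigr do rewrite mulrBr.
by rewrite sumrB -mulr_suml p_sum1 mul1r.
Qed.

(* Write X s - E X as \sum_t p t (X s - X t), then average the two orders of
   summation. *)
Lemma cov_double_sum (X Y : T -> R) :
  cov X Y *+ 2 =
  \sum_(s | P s) \sum_(t | P t) p s * p t * ((X s - X t) * (Y s - Y t)).
Proof.
set b := expect Y.
have covE : cov X Y =
    \sum_(s | P s) \sum_(t | P t) p s * p t * ((X s - X t) * (Y s - b)).
  apply: eq_bigr => s _; rewrite sub_expectE mulr_suml mulr_sumr.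
  by apply: eq_bigr => t _; rewrite !mulrA.
rewrite mulr2n {1}covE {}covE [in X in _ + X]exchange_big -big_split.
apply: eq_bigr => s _; rewrite -big_split; apply: eq_bigr => t _ /=.
by rewrite [p t * p s]mulrC; ring.
Qed.

Lemma cov_ge0 (X Y : T -> R) : comonotone X Y -> 0 <= cov X Y.
Proof.
move=> XY; rewrite -(pmulrn_lge0 _ (isT : (0 < 2)%N)) cov_double_sum.
apply: sumr_ge0 => s Ps; apply: sumr_ge0 => t Pt.
by rewrite mulr_ge0 ?XY // mulr_ge0 ?p_ge0.
Qed.

Lemma comonotone_by_key (key : T -> nat) (X Y : T -> R) :
  {in P &, forall s t, (key s <= key t)%N -> X s <= X t} ->
  {in P &, forall s t, (key s <= key t)%N -> Y s <= Y t} ->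
  comonotone X Y.
Proof.
move=> monoX monoY s t Ps Pt.
case: (leqP (key s) (key t)) => [st | /ltnW ts].
  by rewrite mulr_le0 // subr_le0 ?monoX ?monoY.
by rewrite mulr_ge0 // subr_ge0 ?monoX ?monoY.
Qed.

End WeightedMoments.

Lemma card_notin_lt (T : finType) (x : T) (S : {set T}) :
  x \notin S -> (#|S| < #|T|)%N.
Proof. by move=> xS; have := max_card (x |: S); rewrite cardsU1 xS. Qed.

(* Grouping coalitions by size k, each size contributes
   'C(n, k) * k`! * (n - k)`! = n`!. *)
Lemma shapley_weight_sum (n : nat) (i : 'I_n.+1) :
  (\sum_(S : {set 'I_n.+1} | i \notin S) #|S|`! * (n.+1 - #|S| - 1)`!)%N
  = n.+1`!.
Proof.
have cardS (S : {set 'I_n.+1}) : i \notin S -> (#|S| < n.+1)%N.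
  by move=> /card_notin_lt; rewrite card_ord.
rewrite (partition_big (fun S : {set 'I_n.+1} => inord #|S| : 'I_n.+1) predT)
  //=.
rewrite [LHS](eq_bigr (fun k : 'I_n.+1 => 'C(n, k) * (k`! * (n - k)`!)))%N.
  rewrite (eq_bigr (fun _ => n`!)); last first.
    by move=> k _; rewrite bin_fact // -ltnS.
  by rewrite sum_nat_const card_ord factS.
move=> k _.
rewrite (eq_bigl [in [set S : {set _} | S \subset [set~ i] & #|S| == k]]).
  rewrite (eq_bigr (fun _ => k`! * (n - k)`!))%N.
    by rewrite sum_nat_const cards_draws cardsC1 card_ord.
  by move=> S; rewrite inE => /andP[_ /eqP <-]; rewrite subnAC subn1.
move=> S; rewrite inE subsetC sub1set inE.
case: (boolP (i \in S)) => //= iS.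
apply/eqP/eqP => [<- | kS]; first by rewrite inordK ?cardS.
by apply: val_inj; rewrite /= inordK ?kS ?cardS.
Qed.

Lemma shapley_prob_ge0 (R : realFieldType) (N : nat) (S : {set 'I_N}) :
  0 <= @shapley_prob R N S.
Proof. by rewrite /shapley_prob divr_ge0 ?ler0n. Qed.

Lemma shapley_prob_sum1 (R : realFieldType) (N : nat) (i : 'I_N) :
  \sum_(S : {set 'I_N} | i \notin S) @shapley_prob R N S = 1.
Proof.
case: N i => [[] // | n] i.
rewrite /shapley_prob -mulr_suml -natr_sum shapley_weight_sum.
by rewrite divff // pnatr_eq0 -lt0n fact_gt0.
Qed.

Lemma shapley_uncertaintyE (R : realFieldType) (N : nat) (G : game R N)
    (i : 'I_N) :
  shapley_uncertainty G i =
  var (fun S : {set 'I_N} => i \notin S) (@shapley_prob R N) (marginal G i).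
Proof. by apply: eq_bigr => S _; rewrite expr2. Qed.

Lemma marginal_game_add (R : realFieldType) (N : nat) (G H : game R N)
    (i : 'I_N) :
  marginal (game_add G H) i =1 marginal G i \+ marginal H i.
Proof. by move=> S; rewrite /marginal /game_add /= opprD addrACA. Qed.

Lemma increments_homo (R : realFieldType) (N : nat) (g : nat -> R) :
  (forall k, (k.+1 < N)%N -> g k.+1 - g k <= g k.+2 - g k.+1) ->
  {in [pred k | k < N]%N &,
    {homo (fun k => g k.+1 - g k) : k l / (k <= l)%N >-> k <= l}}.
Proof.
move=> convex_g; apply: homo_leq_in => //; first exact: le_trans.
  by move=> k l _ lN m /andP[_ ml]; rewrite inE (ltn_trans ml lN).
by move=> k _; rewrite inE => /convex_g.
Qed.

Lemma symmetric_convex_marginal_mono (R : realFieldType) (N : nat)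
    (G : game R N) (i : 'I_N) :
  symmetric_convex G ->
  {in [pred S : {set 'I_N} | i \notin S] &, forall S T : {set 'I_N},
    (#|S| <= #|T|)%N -> marginal G i S <= marginal G i T}.
Proof.
move=> [g [Gg [_ convex_g]]] S T iS iT ST.
have margE (U : {set 'I_N}) :
    i \notin U -> marginal G i U = g #|U|.+1 - g #|U|.
  by move=> iU; rewrite /marginal !Gg cardsU1 iU.
have cardU (U : {set 'I_N}) : i \notin U -> #|U| \in [pred k | k < N]%N.
  by move=> /card_notin_lt; rewrite card_ord.
by rewrite !margE // (increments_homo convex_g) ?cardU.
Qed.

Theorem mainTheorem8 (R : realFieldType) (N : nat) (G H : game R N) :
  symmetric_convex G -> symmetric_convex H ->
  forall i : 'I_N,
    shapley_uncertainty (game_add G H) i >=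
      shapley_uncertainty G i + shapley_uncertainty H i.
Proof.
move=> convexG convexH i.
have addGH := marginal_game_add G H i.
rewrite !shapley_uncertaintyE (eq_var _ _ addGH) (varD _ _ (marginal G i)).
suff : 0 <= cov (fun S : {set 'I_N} => i \notin S) (@shapley_prob R N)
                (marginal G i) (marginal H i) by lra.
apply: cov_ge0 => [S _ | | ];
  [exact: shapley_prob_ge0 | exact: shapley_prob_sum1 |].
by apply: (comonotone_by_key (key := fun S : {set 'I_N} => #|S|));
  apply: symmetric_convex_marginal_mono.
Qed.
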